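(* In any execution of Algorithm $\gamma$n-Burst, within any time interval $I^-$ during which at all times at least $n^2$ tasks of cost $\ell_{\min}$ are pending in $\gamma$n-Burst, each $\ell_{\min}$-task has at most one absolute task execution fully contained in $I^-$ (all such absolute task executions appear exactly once).
   Context: Model: $n$ processors with ids $1,\dots,n$ and a shared repository; tasks with ids, arrival times and costs $\ell_{\min}$ or $\ell_{\max}$ ($0<\ell_{\min}<\ell_{\max}$) are injected over time; processors may crash and restart (restarted processors remember only the algorithm and $n$). A task is pending if injected and its completion not yet reported; once reported it is immediately removed. A processor repeatedly obtains the pending set, chooses a task, executes it (a task of cost $\ell$ takes time $\ell/s$ with speedup $s>1$) and reports it; execution is non-preemptive and a crash loses progress. An absolute task execution of $\tau$ is an interval $[t,t']$ in which a processor schedules $\tau$ at $t$ and reports it at $t'$ without stopping in $[t,t')$. Algorithm $\gamma$n-Burst for processor $p$, with $\gamma=\lceil\frac{\ell_{\max}-s\ell_{\min}}{(s-1)\ell_{\min}}\rceil$: counter $c$ set to $0$ on (re)start; each cycle it forms lists $L_{\min},L_{\max}$ of pending tasks of cost $\ell_{\min},\ell_{\max}$ sorted by arrival. Case 1 (both lists $<n^2$): if previous task had cost $\ell_{\min}$, perform task at position $(pn)\bmod|L_{\max}|$ of $L_{\max}$, $c\gets0$; else task at position $(pn)\bmod|L_{\min}|$ of $L_{\min}$, $c\gets\min(c+1,\gamma)$. Case 2 ($|L_{\min}|\ge n^2>|L_{\max}|$): position $pn$ of $L_{\min}$, $c\gets\min(c+1,\gamma)$. Case 3 ($|L_{\max}|\ge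 n^2>|L_{\min}|$): position $pn$ of $L_{\max}$, $c\gets0$. Case 4 (both $\ge n^2$): if $c=\gamma$, position $pn$ of $L_{\max}$, $c\gets0$; else position $pn$ of $L_{\min}$, $c\gets\min(c+1,\gamma)$. Then report the task. *)

From HB Require Import structures.
From mathcomp Require Import all_boot all_order all_algebra.
Set Implicit Arguments. Unset Strict Implicit. Unset Printing Implicit Defensive.
Import Order.TTheory GRing.Theory Num.Theory.

Local Open Scope ring_scope.

Section GammaNBurst.
Variable R : archiRealFieldType.
(* n processors with ids 1..n, costs lmin < lmax, speedup s *)
Variables (n : nat) (lmin lmax s : R).

Definition gamma : int := Num.ceil ((lmax - s * lmin) / ((s - 1) * lmin)).

(* Tasks are identified by their ids (nat).
   Processor p (1 <= p <= n) performs a sequence of cycles k = 0,1,2,...: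
   - active p k : cycle k of p takes place;
   - rdy p k    : time from which p is up and waiting for cycle k
                  ((re)start time or the time the previous task was reported);
   - st p k     : time at which p obtains the pending set and chooses a task;
   - tk p k     : the chosen task;
   - done p k   : p executes tk p k without crashing and reports it
                  (otherwise p crashes during the execution and progress is lost);
   - restart p k: p crashed since the end of cycle k-1 and was restarted
                  before cycle k (so its counter and memory are reset).
   - pend t     : the set of pending tasks at time t, as a list. *)
Record execution := Execution {
  injected : pred nat;
  arrival : nat -> R;
  is_min : pred nat;
  pend : R -> seq nat;
  active : nat -> nat -> bool;
  rdy : nat -> nat -> R;
  st : nat -> nat -> R;
  tk : nat -> nat -> nat;
  done : nat -> nat -> bool;
  restart : nat -> nat -> bool
}.

Variable E : execution.

Definition cost (x : nat) : R := if is_min E x then lmin else lmax.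

(* report time of cycle k of p (if done) *)
Definition fin (p k : nat) : R := st E p k + cost (tk E p k) / s.

Definition arr_le (x y : nat) : bool :=
  (arrival E x < arrival E y) || ((arrival E x == arrival E y) && (x <= y)%N).

(* One choice step of gamma n-Burst for processor p, with counter c,
   cost of the previous task prev (Some true = lmin, Some false = lmax,
   None = no previous task since the last (re)start), and pending set P.
   Returns the chosen task and the new counter value.
   Positions "pn" in cases 2-4 are 1-based (index pn-1), positions
   "(pn) mod |L|" in case 1 are 0-based. *)
Definition choose (p : nat) (c : int) (prev : option bool) (P : seq nat)
    : option (nat * int) :=
  let Lmin := sort arr_le [seq x <- P | is_min E x] in
  let Lmax := sort arr_le [seq x <- P | ~~ is_min E x] in
  let N2 := (n ^ 2)%N in
  let from_min (i : nat) := Some (nth 0%N Lmin i, Order.min (c + 1) gamma) in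
  let from_max (i : nat) := Some (nth 0%N Lmax i, 0 : int) in
  if (size Lmin < N2)%N && (size Lmax < N2)%N then
    if prev == Some true then
      if size Lmax != 0%N then from_max ((p * n) %% size Lmax)%N
      else if size Lmin != 0%N then from_min ((p * n) %% size Lmin)%N
      else None
    else
      if size Lmin != 0%N then from_min ((p * n) %% size Lmin)%N
      else if size Lmax != 0%N then from_max ((p * n) %% size Lmax)%N
      else None
  else if (size Lmax < N2)%N then from_min (p * n).-1
  else if (size Lmin < N2)%N then from_max (p * n).-1
  else if c == gamma then from_max (p * n).-1
  else from_min (p * n).-1.

(* local state (counter, cost of previous task) of p at the start of cycle k *)
Fixpoint state (p k : nat) : int * option bool :=
  match k with
  | 0 => (0, None)
  | k'.+1 =>
      if restart E p k then (0, None) else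
      match choose p (state p k').1 (state p k').2 (pend E (st E p k')) with
      | Some (x, c') => (c', Some (is_min E x))
      | None => (0, None)
      end
  end.

Definition proc (p : nat) : bool := (0 < p <= n)%N.

Definition reported_by (x : nat) (t : R) : Prop :=
  exists p k, [/\ proc p, active E p k, done E p k, tk E p k = x & fin p k <= t].

Definition valid_exec : Prop :=
  [/\
      (forall t x, x \in pend E t <->
         [/\ injected E x, arrival E x <= t & ~ reported_by x t]),
      (forall t, uniq (pend E t)) &
      (forall p, proc p ->
       [/\ 0 <= rdy E p 0,
           (forall k, active E p k.+1 -> active E p k),
           (forall k, active E p k ->
              [/\ rdy E p k <= st E p k,
                  (forall t, rdy E p k <= t < st E p k -> pend E t = [::]) &
                  omap fst (choose p (state p k).1 (state p k).2 (pend E (st E p k)))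
                    = Some (tk E p k)]) &
           (forall k, active E p k ->
              if done E p k then
                (if restart E p k.+1 then (fin p k <= rdy E p k.+1 : Prop)
                 else rdy E p k.+1 = fin p k /\
                      (~~ active E p k.+1 -> forall t, fin p k <= t -> pend E t = [::]))
              else restart E p k.+1 /\ st E p k <= rdy E p k.+1)])].

(* (p,k) is an absolute task execution of x: p schedules x at st p k and reports
   it at fin p k without stopping in between *)
Definition abs_exec (x p k : nat) : bool :=
  [&& proc p, active E p k, done E p k & tk E p k == x].

End GammaNBurst.

(** Suppose processors [pa] and [pb] both execute the same [lmin]-task [x],
    scheduling it at [t1 <= t2] while at least [n^2] [lmin]-tasks are pending.
    Then each picked [x] at position [p n] of the arrival-sorted list of pending
    [lmin]-tasks, i.e. with exactly [p n - 1] pending [lmin]-tasks ahead of it.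
    Since [x] is still pending at [t2], we have [t2 < t1 + lmin/s]: the window
    [(t1, t2]] is shorter than any task execution, so each processor reports at
    most one task in it, and [pa], busy with [x], reports none.  Tasks ahead of
    [x] at [t2] were already pending at [t1], so between [t1] and [t2] the
    number of tasks ahead of [x] drops by at most [n - 1], which forces
    [pa n = pb n].  Finally a processor cannot run two executions of [x]
    starting less than [lmin/s] apart. *)
From Pilot Require Import Defs.
From HB Require Import structures.
From mathcomp Require Import all_boot all_order all_algebra.
From mathcomp Require Import zify lra.
From Stdlib Require Import Classical.
Import Order.TTheory GRing.Theory Num.Theory.
Set Implicit Arguments. Unset Strict Implicit.

Lemma mul_window_eq (a b n : nat) : (b * n <= a * n < b * n + n)%N -> a = b.
Proof.
case/andP=> ba ab; have n_gt0 : (0 < n)%N by lia.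
move: ba; rewrite leq_mul2r eqn0Ngt n_gt0 /= => ba.
move: ab; rewrite -mulSnr ltn_mul2r n_gt0 /= => ab; lia.
Qed.

Lemma count_lt_nth_sorted (T : eqType) (r : rel T) (x0 : T) (s : seq T) i :
  transitive r -> antisymmetric r -> sorted r s -> uniq s -> (i < size s)%N ->
  count (fun y => r y (nth x0 s i) && (y != nth x0 s i)) s = i.
Proof.
move=> r_trans r_anti; elim: s i => [|y s IH] i //= s_sorted /andP[ys s_uniq].
have y_min := order_path_min r_trans s_sorted.
have {}s_sorted := path_sorted s_sorted.
case: i => [_ | i i_lt] /=.
  rewrite eqxx andbF add0n; apply/eqP; rewrite -leqn0 leqNgt -has_count.
  apply/hasPn => z zs; apply/negP => /andP[rzy zny].
  by rewrite (r_anti z y) ?eqxx ?rzy ?(allP y_min) in zny.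
have nth_s : nth x0 s i \in s by apply: mem_nth.
rewrite (allP y_min _ nth_s) (IH i s_sorted s_uniq i_lt).
by case: eqP ys => // ->; rewrite nth_s.
Qed.

Lemma leq_size_rel (T U : eqType) (W : T -> U -> Prop) (D : seq T) (S : seq U) :
  uniq D -> (forall y, y \in D -> exists2 q, q \in S & W y q) ->
  (forall y y' q, y \in D -> y' \in D -> W y q -> W y' q -> y = y') ->
  (size D <= size S)%N.
Proof.
elim: D S => [|y D IH] S //= /andP[yD D_uniq] hW W_inj.
have [q qS Wyq] := hW y (mem_head _ _).
have D_sub z : z \in D -> z \in y :: D by move=> zD; rewrite inE zD orbT.
have S_gt0 : (0 < size S)%N by rewrite lt0n size_eq0; apply: contraTneq qS => ->.
suff : (size D <= size (rem q S))%N by rewrite size_rem //; case: (size S) S_gt0.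
apply: IH => // [z zD | z z' q0 zD z'D]; last by apply: W_inj; apply: D_sub.
have [q' q'S Wzq'] := hW z (D_sub _ zD); exists q' => //.
apply: rem_mem q'S; apply: contraNneq yD => eq_q'q.
by rewrite (W_inj y z q) // ?mem_head ?D_sub // -eq_q'q.
Qed.

Lemma count_le_add_count_notin (T : eqType) (a : pred T) (s1 s2 : seq T) :
  uniq s1 -> (count a s1 <= count a s2 + count (fun y => a y && (y \notin s2)) s1)%N.
Proof.
move=> s1_uniq; rewrite -!size_filter -size_cat.
apply: uniq_leq_size; first exact: filter_uniq.
move=> y; rewrite mem_cat !mem_filter => /andP[ay ys1].
by rewrite ay ys1; case: (y \in s2).
Qed.

Local Open Scope ring_scope.

Section ArrivalOrder.
Variables (R : archiRealFieldType) (E : execution R).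

Lemma arr_le_trans : transitive (arr_le E).
Proof.
move=> y x z; rewrite /arr_le.
case/orP=> [h1|/andP[/eqP e1 h1]]; case/orP=> [h2|/andP[/eqP e2 h2]].
- by rewrite (lt_trans h1 h2).
- by rewrite -e2 h1.
- by rewrite e1 h2.
- by rewrite e1 e2 eqxx (leq_trans h1 h2) orbT.
Qed.

Lemma arr_le_total : total (arr_le E).
Proof.
move=> x y; rewrite /arr_le.
by case: (ltgtP (arrival E x) (arrival E y)) => //= _; rewrite leq_total.
Qed.

Lemma arr_le_anti : antisymmetric (arr_le E).
Proof.
move=> x y; rewrite /arr_le.
case: (ltgtP (arrival E x) (arrival E y)) => //= _ /andP[h1 h2].
by apply/eqP; rewrite eqn_leq h1 h2.
Qed.

Lemma arr_le_arrival x y : arr_le E x y -> arrival E x <= arrival E y.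
Proof. by case/orP=> [/ltW //|/andP[/eqP -> _]]. Qed.

End ArrivalOrder.

Section Burst.
Variables (R : archiRealFieldType) (n : nat) (lmin lmax s : R) (E : execution R).

Local Notation fin := (fin lmin lmax s E).
Local Notation abs_exec := (abs_exec n E).
Local Notation reported_by := (reported_by n lmin lmax s E).

Definition min_list (P : seq nat) : seq nat :=
  sort (arr_le E) [seq y <- P | is_min E y].

Definition ahead (x y : nat) : bool := [&& is_min E y, arr_le E y x & y != x].

Lemma choose_min_nth p c prev P x :
  proc n p -> (n ^ 2 <= count (is_min E) P)%N -> is_min E x ->
  omap fst (Defs.choose n lmin lmax s E p c prev P) = Some x ->
  x = nth 0%N (min_list P) (p * n).-1 /\ ((p * n).-1 < size (min_list P))%N.
Proof.
move=> /andP[p_gt0 p_le] min_many x_min chosen.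
have pos_lt : ((p * n).-1 < n ^ 2)%N.
  have : (p * n <= n * n)%N by rewrite leq_mul2r p_le orbT.
  by rewrite expnS expn1; lia.
have size_min : (n ^ 2 <= size (min_list P))%N by rewrite size_sort size_filter.
split; last exact: leq_trans pos_lt size_min.
move: chosen; rewrite /Defs.choose -/(min_list P).
have -> : (size (min_list P) < n ^ 2)%N = false by rewrite ltnNge size_min.
set Lmax := sort _ _; case: ifP => [_ [] <- // | Lmax_big].
have : ~~ is_min E (nth 0%N Lmax (p * n).-1).
  have : nth 0%N Lmax (p * n).-1 \in Lmax.
    by apply: mem_nth; apply: leq_trans pos_lt _; rewrite leqNgt Lmax_big.
  by rewrite mem_sort mem_filter => /andP[].
by case: ifP => _ Lmax_max [] // eq_x; subst x; rewrite x_min in Lmax_max.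
Qed.

Lemma count_ahead_nth (P : seq nat) i :
  uniq P -> (i < size (min_list P))%N ->
  count (ahead (nth 0%N (min_list P) i)) P = i /\ nth 0%N (min_list P) i \in P.
Proof.
move=> P_uniq i_lt; split; last first.
  by have := mem_nth 0%N i_lt; rewrite mem_sort mem_filter => /andP[].
have := count_lt_nth_sorted 0%N (@arr_le_trans R E) (@arr_le_anti R E)
  (sort_sorted (@arr_le_total R E) _) (etrans (sort_uniq _ _) (filter_uniq _ P_uniq)) i_lt.
rewrite -/(min_list P) (permP (permEl (perm_sort _ _))) count_filter => cnt.
by rewrite -[RHS]cnt; apply: eq_count => y; rewrite /ahead /= andbC.
Qed.

Hypotheses (lmin_gt0 : 0 < lmin) (lmin_le_lmax : lmin <= lmax) (s_gt0 : 0 < s).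
Hypothesis exec_valid : valid_exec n lmin lmax s E.

Lemma st_add_le_fin p k : st E p k + lmin / s <= fin p k.
Proof.
rewrite /Defs.fin lerD2l /cost; case: ifP => // _.
by apply: ler_wpM2r; rewrite // invr_ge0 ltW.
Qed.

Lemma fin_min p k : is_min E (tk E p k) -> fin p k = st E p k + lmin / s.
Proof. by rewrite /Defs.fin /cost => ->. Qed.

Lemma pendP t x :
  x \in pend E t <-> [/\ injected E x, arrival E x <= t & ~ reported_by x t].
Proof. by case: exec_valid. Qed.

Lemma pend_uniq t : uniq (pend E t).
Proof. by case: exec_valid. Qed.

Lemma active_pred p k : proc n p -> active E p k.+1 -> active E p k.
Proof. by move=> p_proc; case: exec_valid => _ _ /(_ p p_proc)[_ /(_ k)]. Qed.

Lemma chosen_task p k : proc n p -> active E p k ->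
  exists c prev,
    omap fst (Defs.choose n lmin lmax s E p c prev (pend E (st E p k))) = Some (tk E p k).
Proof.
move=> p_proc act; case: exec_valid => _ _ /(_ p p_proc)[_ _ /(_ k act)[_ _ chosen] _].
by do 2 eexists; exact: chosen.
Qed.

Lemma succ_cycle_bounds p k : proc n p -> active E p k.+1 ->
  st E p k <= st E p k.+1 /\ (done E p k -> fin p k <= st E p k.+1).
Proof.
move=> p_proc act1; have act0 := active_pred p_proc act1.
case: exec_valid => _ _ /(_ p p_proc) [_ _ cycle trans].
have [rdy_st1 _ _] := cycle _ act1.
have := st_add_le_fin p k; have : 0 < lmin / s by rewrite divr_gt0.
have := trans _ act0; case: (done E p k) => /=.
- by case: (restart E p k.+1) => [? | [? _]] ? ?; split => [|_]; lra.
- by case=> _ ? ? ?; split => //; lra.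
Qed.

Lemma fin_le_st p k k' :
  proc n p -> active E p k' -> (k < k')%N -> done E p k -> fin p k <= st E p k'.
Proof.
move=> p_proc; elim: k' => // k' IH act; rewrite ltnS leq_eqVlt => /orP[/eqP -> | lt] dk.
  by case: (succ_cycle_bounds p_proc act) => _ /(_ dk).
have [st_le _] := succ_cycle_bounds p_proc act.
exact: le_trans (IH (active_pred p_proc act) lt dk) st_le.
Qed.

Lemma abs_exec_fin_close x x' p k k' : abs_exec x p k -> abs_exec x' p k' ->
  fin p k < fin p k' + lmin / s -> fin p k' < fin p k + lmin / s -> k = k'.
Proof.
move=> /and4P[p_proc act dk _] /and4P[_ act' dk' _] close close'.
case: (ltngtP k k') => // lt; exfalso.
- by have := fin_le_st p_proc act' lt dk; have := st_add_le_fin p k'; lra.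
- by have := fin_le_st p_proc act lt dk'; have := st_add_le_fin p k; lra.
Qed.

Lemma pend_lt_fin x p k t : abs_exec x p k -> x \in pend E t -> t < fin p k.
Proof.
move=> /and4P[p_proc act dk /eqP tk_x] /pendP[_ _ not_rep].
by rewrite ltNge; apply/negP => fin_le; apply: not_rep; exists p, k.
Qed.

Lemma reported_between y t1 t2 : t1 <= t2 -> y \in pend E t1 -> y \notin pend E t2 ->
  exists p k, [/\ abs_exec y p k, t1 < fin p k & fin p k <= t2].
Proof.
move=> t12 /pendP[inj arr1 not_rep1] /negP not_pend2.
have [p [k [p_proc act dk tk_y fin2]]] : reported_by y t2.
  apply: NNPP => not_rep2; apply: not_pend2; apply/pendP; split => //.
  exact: le_trans arr1 t12.
exists p, k; split => //; first by apply/and4P; split => //; apply/eqP.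
by rewrite ltNge; apply/negP => fin1; apply: not_rep1; exists p, k.
Qed.

Lemma ahead_pend_later x y t1 t2 : t1 <= t2 -> x \in pend E t1 -> ahead x y ->
  y \in pend E t2 -> y \in pend E t1.
Proof.
move=> t12 /pendP[_ arr_x _] /and3P[_ y_x _] /pendP[inj _ not_rep2].
apply/pendP; split => //; first exact: le_trans (arr_le_arrival y_x) arr_x.
move=> [p [k [p_proc act dk tk_y fin1]]]; apply: not_rep2.
by exists p, k; split => //; apply: le_trans fin1 t12.
Qed.

(* Each task other than [x] leaving the pending set while [pa] runs [x] is
   reported by its own processor, distinct from [pa]. *)
Lemma count_reported_window_lt x pa ka t2 :
  abs_exec x pa ka -> is_min E x -> st E pa ka <= t2 < fin pa ka ->
  (count (fun y => (y != x) && (y \notin pend E t2)) (pend E (st E pa ka)) < n)%N.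
Proof.
move=> exec_x x_min /andP[t12 t2_fin].
have [/andP[pa_gt0 pa_le] _ _ /eqP tk_x] := and4P exec_x.
have fin_x : fin pa ka = st E pa ka + lmin / s by rewrite fin_min // tk_x.
set t1 := st E pa ka in t12 fin_x *.
have pa_iota : pa \in iota 1 n by rewrite mem_iota; lia.
rewrite -size_filter; apply: (@leq_trans (size (rem pa (iota 1 n))).+1); last first.
  by rewrite size_rem // size_iota; lia.
rewrite ltnS; apply: (@leq_size_rel _ _
  (fun y q => exists k, [/\ abs_exec y q k, t1 < fin q k & fin q k <= t2])).
- exact/filter_uniq/pend_uniq.
- move=> y; rewrite mem_filter => /andP[/andP[y_x not_pend2] pend1].
  have [q [k [exec_y t1_fin fin_t2]]] := reported_between t12 pend1 not_pend2.
  exists q; last by exists k.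
  have [/andP[q_gt0 q_le] _ _ /eqP tk_y] := and4P exec_y.
  apply: rem_mem; last by rewrite mem_iota; lia.
  apply: contraNneq y_x => q_pa; subst q.
  by rewrite -tk_y -tk_x (abs_exec_fin_close exec_y exec_x) //; lra.
- move=> y y' q _ _ [k [exec_y t1_fin fin_t2]] [k' [exec_y' t1_fin' fin_t2']].
  have [_ _ _ /eqP <-] := and4P exec_y; have [_ _ _ /eqP <-] := and4P exec_y'.
  by rewrite (abs_exec_fin_close exec_y exec_y') //; lra.
Qed.

Lemma abs_exec_min_count_ahead x p k : abs_exec x p k -> is_min E x ->
  (n ^ 2 <= count (is_min E) (pend E (st E p k)))%N ->
  count (ahead x) (pend E (st E p k)) = (p * n).-1 /\ x \in pend E (st E p k).
Proof.
move=> /and4P[p_proc act _ /eqP tk_x] x_min many_min.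
have [c [prev chosen]] := chosen_task p_proc act; rewrite tk_x in chosen.
have [-> pos_lt] := choose_min_nth p_proc many_min x_min chosen.
exact: count_ahead_nth (pend_uniq _) pos_lt.
Qed.

Lemma min_exec_unique_le x pa ka pb kb :
  is_min E x -> abs_exec x pa ka -> abs_exec x pb kb ->
  (n ^ 2 <= count (is_min E) (pend E (st E pa ka)))%N ->
  (n ^ 2 <= count (is_min E) (pend E (st E pb kb)))%N ->
  st E pa ka <= st E pb kb -> pa = pb /\ ka = kb.
Proof.
move=> x_min exec_a exec_b many_a many_b t12.
have [cnt_a pend_a] := abs_exec_min_count_ahead exec_a x_min many_a.
have [cnt_b pend_b] := abs_exec_min_count_ahead exec_b x_min many_b.
have t2_fin := pend_lt_fin exec_a pend_b.
set t1 := st E pa ka in t12 t2_fin cnt_a pend_a *.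
set t2 := st E pb kb in t12 t2_fin cnt_b pend_b *.
have ahead_le : (count (ahead x) (pend E t2) <= count (ahead x) (pend E t1))%N.
  rewrite -!size_filter; apply: uniq_leq_size; first exact/filter_uniq/pend_uniq.
  move=> y; rewrite !mem_filter => /andP[ahead_y pend2]; rewrite ahead_y.
  exact: ahead_pend_later t12 pend_a ahead_y pend2.
have ahead_drop : (count (ahead x) (pend E t1) < count (ahead x) (pend E t2) + n)%N.
  apply: leq_ltn_trans (count_le_add_count_notin _ (pend E t2) (pend_uniq _)) _.
  rewrite ltn_add2l; apply: leq_ltn_trans (count_reported_window_lt (t2 := t2) exec_a x_min _).
    by apply: sub_count => y /andP[/and3P[_ _ ->] ->].
  by rewrite t12.
have [/andP[pa_gt0 pa_le] _ _ /eqP tk_a] := and4P exec_a.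
have [/andP[pb_gt0 _] _ _ /eqP tk_b] := and4P exec_b.
have pan_gt0 : (0 < pa * n)%N by rewrite muln_gt0 pa_gt0; apply: leq_trans pa_le.
have pbn_gt0 : (0 < pb * n)%N by rewrite muln_gt0 pb_gt0; apply: leq_trans pa_le.
have pa_pb : pa = pb by apply: (@mul_window_eq _ _ n); lia.
subst pb; split => //.
have fin_a : fin pa ka = t1 + lmin / s by rewrite fin_min // tk_a.
have fin_b : fin pa kb = t2 + lmin / s by rewrite fin_min // tk_b.
have d_gt0 : 0 < lmin / s by rewrite divr_gt0.
by apply: (abs_exec_fin_close exec_a exec_b); lra.
Qed.

End Burst.

Theorem lemma12 (R : archiRealFieldType) (n : nat) (lmin lmax s : R)
    (E : execution R) (I : interval R) :
  (0 < n)%N -> 0 < lmin -> lmin < lmax -> 1 < s ->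
  valid_exec n lmin lmax s E ->
  (forall t, t \in I -> (n ^ 2 <= count (is_min E) (pend E t))%N) ->
  forall x, is_min E x ->
  forall p1 k1 p2 k2,
    abs_exec n E x p1 k1 -> st E p1 k1 \in I -> fin lmin lmax s E p1 k1 \in I ->
    abs_exec n E x p2 k2 -> st E p2 k2 \in I -> fin lmin lmax s E p2 k2 \in I ->
    p1 = p2 /\ k1 = k2.
Proof.
move=> _ lmin_gt0 lmin_lt_lmax s_gt1 exec_valid many_in_I x x_min p1 k1 p2 k2.
move=> exec1 st1_I _ exec2 st2_I _.
have unique_le := min_exec_unique_le lmin_gt0 (ltW lmin_lt_lmax)
  (lt_trans ltr01 s_gt1) exec_valid x_min.
case: (lerP (st E p1 k1) (st E p2 k2)) => st12.
  exact: unique_le p1 k1 p2 k2 exec1 exec2 (many_in_I _ st1_I) (many_in_I _ st2_I) st12.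
by case: (unique_le p2 k2 p1 k1 exec2 exec1 (many_in_I _ st2_I) (many_in_I _ st1_I)
  (ltW st12)) => -> ->.
Qed.
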